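(* Let $G$ be a locally nilpotent group which is not periodic. Then $G$ contains no finite contranormal subgroups.
   Context: A subgroup $H$ of $G$ is contranormal in $G$ if its normal closure $H^G$ equals $G$. *)

From HB Require Import structures.
From mathcomp Require Import all_boot.
From mathcomp Require Import monoid.

Set Implicit Arguments.
Unset Strict Implicit.
Unset Printing Implicit Defensive.

Local Open Scope group_scope.

Section GroupDefs.
Variable G : groupType.
Implicit Types (x y : G) (H K N S : G -> Prop).

Definition is_subgroup H : Prop :=
  [/\ H 1, (forall x y, H x -> H y -> H (x * y)) & (forall x, H x -> H x^-1)].

Definition generated S : G -> Prop :=
  fun x => forall K, is_subgroup K -> (forall y, S y -> K y) -> K x.

Definition is_normal N : Prop :=
  is_subgroup N /\ forall x g : G, N x -> N (x ^ g).

Definition normal_closure H : G -> Prop :=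
  fun x => forall N, is_normal N -> (forall y, H y -> N y) -> N x.

Definition contranormal H : Prop := forall x, normal_closure H x.

Definition finite_subset H : Prop := exists s : seq G, forall x, H x -> x \in s.

Definition periodic : Prop := forall x, exists2 n : nat, (0 < n)%N & x ^+ n = 1.

(* lower central series of a subgroup K: gamma_1(K) = K (index 0 here),
   gamma_{i+1}(K) = [gamma_i(K), K] *)
Fixpoint lower_central K (n : nat) : G -> Prop :=
  match n with
  | 0 => K
  | n'.+1 => generated (fun z => exists a b, [/\ lower_central K n' a, K b
                                              & z = [~ a, b]])
  end.

Definition nilpotent K : Prop := exists c : nat, forall x, lower_central K c x -> x = 1.

Definition locally_nilpotent : Prop :=
  forall s : seq G, nilpotent (generated (fun x => x \in s)).

End GroupDefs.

(** The elements of finite order of a locally nilpotent group form a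
   subgroup, which is normal and contains every finite subgroup [H]; so
   [H^G = G] forces [G] to be periodic.  Closure under products reduces to:
   a nilpotent group [K] generated by elements of finite order is periodic.
   Indeed [K/gamma_1] is then periodic, and for [b] in [K] the map
   [a |-> [a, b]] induces a homomorphism [gamma_j/gamma_(j+1) ->
   gamma_(j+1)/gamma_(j+2)] whose images generate this abelian group, so by
   induction every factor of the lower central series is periodic. *)
From HB Require Import structures.
From mathcomp Require Import all_boot.
From mathcomp Require Import monoid.

Set Implicit Arguments.
Unset Strict Implicit.
Unset Printing Implicit Defensive.
Local Open Scope group_scope.

Section Subgroups.
Variable G : groupType.
Implicit Types (x y : G) (S : G -> Prop).

Section Closure.
Variable K : G -> Prop.
Hypothesis sK : is_subgroup K.

Lemma subgroup1 : K 1.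
Proof. by case: sK. Qed.

Lemma subgroupM x y : K x -> K y -> K (x * y).
Proof. by case: sK => _ + _; apply. Qed.

Lemma subgroupV x : K x -> K x^-1.
Proof. by case: sK => _ _; apply. Qed.

Lemma subgroupX x n : K x -> K (x ^+ n).
Proof.
move=> Kx; elim: n => [|n IHn]; first exact: subgroup1.
by rewrite expgS; apply: subgroupM.
Qed.

Lemma subgroupJ x y : K x -> K y -> K (x ^ y).
Proof.
by move=> Kx Ky; rewrite conjgE; apply: subgroupM (subgroupV Ky) (subgroupM Kx Ky).
Qed.

Lemma subgroupR x y : K x -> K y -> K [~ x, y].
Proof. by move=> Kx Ky; rewrite commgEl; apply: subgroupM (subgroupV Kx) (subgroupJ Kx Ky). Qed.

End Closure.

Lemma generated_subgroup S : is_subgroup (generated S).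
Proof.
split=> [K [] // | x y Sx Sy K sK SK | x Sx K sK SK].
- exact: (subgroupM sK (Sx K sK SK) (Sy K sK SK)).
- exact: (subgroupV sK (Sx K sK SK)).
Qed.

Lemma mem_generated S x : S x -> generated S x.
Proof. by move=> Sx K _; apply. Qed.

Lemma generated_min S (K : G -> Prop) :
  is_subgroup K -> (forall y, S y -> K y) -> forall x, generated S x -> K x.
Proof. by move=> sK SK x; apply. Qed.

End Subgroups.

Section Modulo.
Variable G : groupType.
Implicit Types (x y z : G) (N : G -> Prop).

Definition eq_mod N x y := N (y^-1 * x).

Definition finite_order_mod N x := exists2 n, (0 < n)%N & N (x ^+ n).

Definition finite_order x := exists2 n, (0 < n)%N & x ^+ n = 1.

Variables (K N : G -> Prop).
Hypothesis sN : is_subgroup N.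
Hypothesis nKN : forall x k, N x -> K k -> N (x ^ k).

Lemma eq_mod_refl x : eq_mod N x x.
Proof. by rewrite /eq_mod mulVg; apply: (subgroup1 sN). Qed.

Lemma eq_mod_sym x y : eq_mod N x y -> eq_mod N y x.
Proof. by move/(subgroupV sN); rewrite /eq_mod invgM invgK. Qed.

Lemma eq_mod_trans y x z : eq_mod N x y -> eq_mod N y z -> eq_mod N x z.
Proof. by move=> Nxy Nyz; have := subgroupM sN Nyz Nxy; rewrite /eq_mod mulgA mulgK. Qed.

Lemma eq_modMl z x y : eq_mod N x y -> eq_mod N (z * x) (z * y).
Proof. by rewrite /eq_mod invgM -mulgA mulKg. Qed.

Lemma eq_modMr z x y : K z -> eq_mod N x y -> eq_mod N (x * z) (y * z).
Proof. by move=> Kz /nKN /(_ Kz); rewrite /eq_mod conjgE invgM !mulgA. Qed.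

Lemma eq_mod_mem x y : eq_mod N x y -> N y -> N x.
Proof. by move=> Nxy Ny; have := subgroupM sN Ny Nxy; rewrite mulVKg. Qed.

End Modulo.

Lemma commMgJ (G : groupType) (x y z : G) : [~ x * y, z] = [~ x, z] ^ y * [~ y, z].
Proof. by rewrite !commgEl !conjgE !invgM !mulgA !mulgK. Qed.

Section LowerCentral.
Variable G : groupType.
Variable K : G -> Prop.
Hypothesis sK : is_subgroup K.
Implicit Types (x y g h k : G).
Local Notation gamma := (lower_central K).

Lemma lower_central_subgroup j : is_subgroup (gamma j).
Proof. by case: j => [|j] //; apply: generated_subgroup. Qed.

Lemma lower_central_sub j x : gamma j x -> K x.
Proof.
elim: j x => [|j IHj] //; apply: generated_min sK _ => _ [a [b [Ga Kb ->]]].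
exact: (subgroupR sK (IHj a Ga) Kb).
Qed.

Lemma mem_lower_centralR j x k : gamma j x -> K k -> gamma j.+1 [~ x, k].
Proof. by move=> Gx Kk; apply: mem_generated; exists x, k. Qed.

Lemma lower_centralJ j x k : gamma j x -> K k -> gamma j (x ^ k).
Proof.
elim: j x k => [|j IHj] x k; first exact: subgroupJ.
move=> Gx; move: x Gx k; apply: generated_min.
  split=> [k _ | x y Gx Gy k Kk | x Gx k Kk].
  - by rewrite conj1g; apply: subgroup1 (lower_central_subgroup _).
  - by rewrite conjMg; apply: (subgroupM (lower_central_subgroup _) (Gx k Kk) (Gy k Kk)).
  - by rewrite conjVg; apply: (subgroupV (lower_central_subgroup _) (Gx k Kk)).
move=> _ [a [b [Ga Kb ->]]] k Kk; rewrite conjRg.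
by apply: mem_lower_centralR; [apply: IHj | apply: subgroupJ].
Qed.

Lemma eq_mod_lower_centralJ j x k :
  gamma j x -> K k -> eq_mod (gamma j.+1) (x ^ k) x.
Proof. by move=> Gx Kk; rewrite /eq_mod -commgEl; apply: mem_lower_centralR. Qed.

Lemma eq_mod_lower_centralC j g k :
  gamma j g -> K k -> eq_mod (gamma j.+1) (k * g) (g * k).
Proof.
move=> Gg Kk; have := subgroupV (lower_central_subgroup _) (mem_lower_centralR Gg Kk).
by rewrite invgR /eq_mod commgEl conjgE invgM !mulgA.
Qed.

Lemma expgMn_eq_mod j g h n :
  gamma j g -> K h -> eq_mod (gamma j.+1) ((g * h) ^+ n) (g ^+ n * h ^+ n).
Proof.
move=> Gg Kh; have sG := lower_central_subgroup j.+1.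
elim: n => [|n IHn]; first by rewrite !expg0 mulg1; apply: eq_mod_refl.
have hgn : eq_mod (gamma j.+1) (h * g ^+ n) (g ^+ n * h).
  exact: eq_mod_lower_centralC (subgroupX (lower_central_subgroup j) n Gg) Kh.
rewrite !expgS; apply: (eq_mod_trans sG (eq_modMl (g * h) IHn)).
have := eq_modMl g (eq_modMr (@lower_centralJ j.+1) (subgroupX sK n Kh) hgn).
by rewrite !mulgA.
Qed.

Lemma commXg_eq_mod j a b n :
  gamma j a -> K b -> eq_mod (gamma j.+2) ([~ a, b] ^+ n) [~ a ^+ n, b].
Proof.
move=> Ga Kb; have sG := lower_central_subgroup j.+2.
have Ka := lower_central_sub Ga.
elim: n => [|n IHn]; first by rewrite !expg0 comm1g; apply: eq_mod_refl.
have Kan : K (a ^+ n) := subgroupX sK n Ka.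
have hab : eq_mod (gamma j.+2) [~ a, b] ([~ a, b] ^ a ^+ n).
  exact: (eq_mod_sym sG (eq_mod_lower_centralJ (mem_lower_centralR Ga Kb) Kan)).
rewrite expgS (expgS a) commMgJ; apply: (eq_mod_trans sG (eq_modMl _ IHn)).
exact: (eq_modMr (@lower_centralJ j.+2) (subgroupR sK Kan Kb) hab).
Qed.

Lemma finite_order_mod_lower_central_subgroup j :
  is_subgroup (fun x => gamma j x /\ finite_order_mod (gamma j.+1) x).
Proof.
have sG := lower_central_subgroup j; have sG' := lower_central_subgroup j.+1.
split=> [| x y [Gx [a a0 Gxa]] [Gy [b b0 Gyb]] | x [Gx [a a0 Gxa]]].
- by split; [exact: subgroup1 | exists 1%N => //; exact: subgroup1].
- split; first exact: (subgroupM sG).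
  exists (a * b)%N; first by rewrite muln_gt0 a0.
  have Gxab : gamma j.+1 (x ^+ (a * b)) by rewrite expgnA; apply: (subgroupX sG' b Gxa).
  have Gyab : gamma j.+1 (y ^+ (a * b)).
    by rewrite mulnC expgnA; apply: (subgroupX sG' a Gyb).
  exact: (eq_mod_mem sG' (expgMn_eq_mod _ Gx (lower_central_sub Gy)) (subgroupM sG' Gxab Gyab)).
- split; first exact: (subgroupV sG).
  by exists a => //; rewrite expVgn; apply: (subgroupV sG').
Qed.

Hypothesis K_finite_order_mod_commutator :
  forall x, K x -> finite_order_mod (gamma 1) x.

Lemma lower_central_finite_order_mod j x :
  gamma j x -> finite_order_mod (gamma j.+1) x.
Proof.
elim: j x => [|j IHj] x; first exact: K_finite_order_mod_commutator.
suff gen_sub : forall y, gamma j.+1 y -> gamma j.+1 y /\ finite_order_mod (gamma j.+2) y.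
  by move=> /gen_sub[].
apply: generated_min (finite_order_mod_lower_central_subgroup _) _ => _ [a [b [Ga Kb ->]]].
split; first exact: mem_lower_centralR.
have [n n0 Gan] := IHj a Ga; exists n => //.
exact: (eq_mod_mem (lower_central_subgroup _) (commXg_eq_mod n Ga Kb) (mem_lower_centralR Gan Kb)).
Qed.

Lemma lower_central_power j x : K x -> exists2 n, (0 < n)%N & gamma j (x ^+ n).
Proof.
move=> Kx; elim: j => [|j [n n0 Gxn]]; first by exists 1%N.
have [m m0 Gxnm] := lower_central_finite_order_mod Gxn.
by exists (n * m)%N; rewrite ?muln_gt0 ?n0 // expgnA.
Qed.

Lemma nilpotent_finite_order : nilpotent K -> forall x, K x -> finite_order x.
Proof.
by move=> [c trivc] x /(lower_central_power c) [n n0 /trivc]; exists n.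
Qed.

End LowerCentral.

Lemma nilpotent_generated_finite_order (G : groupType) (S : G -> Prop) :
  (forall s, S s -> finite_order s) -> nilpotent (generated S) ->
  forall x, generated S x -> finite_order x.
Proof.
move=> Sfin; apply: nilpotent_finite_order (generated_subgroup S) _ => x Sx.
have sT := finite_order_mod_lower_central_subgroup (generated_subgroup S) 0.
suff [] : generated S x /\ finite_order_mod (lower_central (generated S) 1) x by [].
apply: generated_min sT _ x Sx => s Ss; split; first exact: mem_generated.
have [n n0 sn1] := Sfin s Ss; exists n; rewrite ?sn1 //.
exact: subgroup1 (lower_central_subgroup (generated_subgroup S) 1).
Qed.

Lemma finite_subgroup_finite_order (G : groupType) (H : G -> Prop) x :
  is_subgroup H -> finite_subset H -> H x -> finite_order x.
Proof.
move=> sH [s Hs] Hx; pose t := mkseq (fun i => x ^+ i) (size s).+1.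
have t_s : {subset t <= s} by move=> _ /mapP [i _ ->]; apply/Hs/(subgroupX sH).
have : ~~ uniq t by apply/negP => /uniq_leq_size/(_ t_s); rewrite size_mkseq ltnn.
case/(uniqPn 1) => i [j []]; rewrite size_mkseq => lt_ij lt_jt.
rewrite !nth_mkseq ?(ltn_trans lt_ij) // => xij.
exists (j - i)%N; first by rewrite subn_gt0.
by apply: (mulgI (x ^+ i)); rewrite -expgnDr subnKC ?(ltnW lt_ij) // xij mulg1.
Qed.

Lemma finite_orderM (G : groupType) (x y : G) : locally_nilpotent G ->
  finite_order x -> finite_order y -> finite_order (x * y).
Proof.
move=> lnG ox oy; apply: (nilpotent_generated_finite_order _ (lnG [:: x; y])).
- by move=> z; rewrite !inE => /orP[] /eqP->.
- by apply: (subgroupM (generated_subgroup _)); apply: mem_generated; rewrite !inE eqxx ?orbT.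
Qed.

Lemma finite_order_normal (G : groupType) :
  locally_nilpotent G -> is_normal (@finite_order G).
Proof.
move=> lnG; split; first split.
- by exists 1%N.
- by move=> x y; apply: finite_orderM.
- by move=> x [n n0 xn]; exists n; rewrite // expVgn xn invg1.
- by move=> x g [n n0 xn]; exists n; rewrite // -conjXg xn conj1g.
Qed.

Theorem lemma3p5 (G : groupType) :
  locally_nilpotent G -> ~ periodic G ->
  forall H : G -> Prop, is_subgroup H -> finite_subset H -> ~ contranormal H.
Proof.
move=> lnG nonperiodic H sH finH contraH; apply: nonperiodic => x.
apply: (contraH x _ (finite_order_normal lnG)) => y.
exact: finite_subgroup_finite_order.
Qed.
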